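(* Let $F$ be a cellular automaton on $A^{\mathbb N}$ with diameter $\delta$ and local rule $f$. For every $u\in A^\delta$, if $\mathfrak d_L(u^\infty,F(u^\infty))=0$, then there exists $k\in\{0,\dots,\delta-1\}$ such that $F(u^\infty)=\sigma^k(u^\infty)$.
   Context: $A$ is a finite alphabet; $u^\infty=uuu\cdots\in A^{\mathbb N}$; $\sigma(x)_i=x_{i+1}$; $x_{[i,j)}=x_i\cdots x_{j-1}$. A cellular automaton with diameter $\delta\ge1$ is $F:A^{\mathbb N}\to A^{\mathbb N}$ with $F(x)_i=f(x_{[i,i+\delta)})$ for a local rule $f:A^\delta\to A$. The Levenshtein distance is $d_L(u,v)=\frac{|u|+|v|}{2}-\ell$, $\ell$ the length of a longest common subsequence; the Feldman pseudo-metric is $\mathfrak d_L(x,y)=\limsup_{l\to\infty}d_L(x_{[0,l)},y_{[0,l)})/l$. *)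

From mathcomp Require Import all_boot all_order all_algebra.
From mathcomp Require Import all_classical all_reals all_analysis.
Set Implicit Arguments. Unset Strict Implicit. Unset Printing Implicit Defensive.
Import Order.TTheory GRing.Theory Num.Theory.
Local Open Scope ring_scope.

Section Defs.
Variable A : finType.

Definition cshift (x : nat -> A) : nat -> A := fun i => x i.+1.

Definition CA (delta : nat) (f : delta.-tuple A -> A) (x : nat -> A) : nat -> A :=
  fun i => f [tuple x (i + val j) | j < delta].

Definition uinf (delta : nat) (u : delta.-tuple A) (hd : (0 < delta)%N) : nat -> A :=
  fun i => tnth u (Ordinal (ltn_pmod i hd)).

Definition lcs (u v : seq A) : nat :=
  (\max_(m : (size u).-tuple bool | subseq (mask m u) v) size (mask m u))%N.

Definition levenshtein (R : realType) (u v : seq A) : R :=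
  ((size u + size v)%:R / 2) - (lcs u v)%:R.

Definition prefix (x : nat -> A) (l : nat) : seq A := mkseq x l.

Definition feldman (R : realType) (x y : nat -> A) : \bar R :=
  limn_esup (fun l : nat => (levenshtein R (prefix x l) (prefix y l) / l%:R)%:E).
End Defs.

From Pilot Require Import Defs.
From mathcomp Require Import all_boot all_order all_algebra.
From mathcomp Require Import all_classical all_reals all_analysis.
From mathcomp Require Import zify.
Set Implicit Arguments. Unset Strict Implicit. Unset Printing Implicit Defensive.
Import Order.TTheory GRing.Theory Num.Theory.

(* Both x = u^oo and y = F(x) are delta-periodic.  If the Feldman distance
   vanishes, some prefix length l has l - L < l / (4 delta), where L is the
   length of a longest common subsequence of x_[0,l) and y_[0,l).  Along the
   matched index pairs (i_t, j_t) the number of skipped positions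
   (i_t - t) + (j_t - t) is nondecreasing and at most 2 (l - L), so on one of
   2 (l - L) + 1 consecutive blocks of delta matches it is constant: the
   block is a run x_(a+s) = y_(b+s), s < delta.  A run of one full period
   forces y = sigma^k x with k = a - b mod delta. *)

Definition slack (I : seq nat) (t : nat) : nat := nth 0 I t - t.

Section IndexSubsequence.
Variables (l : nat) (I : seq nat).
Hypothesis I_sub : subseq I (iota 0 l).

Let I_sorted : sorted ltn I := subseq_sorted ltn_trans I_sub (iota_ltn_sorted 0 l).

Lemma nth_index_addn t k : t + k < size I -> nth 0 I t + k <= nth 0 I (t + k).
Proof.
elim: k => [|k IHk] lt_tk; first by rewrite !addn0.
have step : nth 0 I (t + k) < nth 0 I (t + k.+1).
  by apply: (sorted_ltn_nth ltn_trans) => //; rewrite ?inE; lia.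
have := IHk (ltnW _); lia.
Qed.

Lemma slack_homo s t : s <= t -> t < size I -> slack I s <= slack I t.
Proof.
move=> le_st lt_t; rewrite /slack.
have := @nth_index_addn s (t - s); have := @nth_index_addn 0 s.
rewrite add0n subnKC //; lia.
Qed.

Lemma slack_le t : t < size I -> slack I t <= l - size I.
Proof.
move=> lt_t; have last_lt : (size I).-1 < size I by rewrite (ltn_predK lt_t).
have le_t_last : t <= (size I).-1 by rewrite -ltnS (ltn_predK lt_t).
have : nth 0 I (size I).-1 \in iota 0 l by rewrite (mem_subseq I_sub) ?mem_nth.
have := slack_homo le_t_last last_lt; rewrite mem_iota /slack; lia.
Qed.

Lemma slack_const_run s t : s <= t -> t < size I -> slack I s = slack I t ->
  forall k, s + k <= t -> nth 0 I (s + k) = nth 0 I s + k.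
Proof.
move=> le_st lt_t eq_slack k le_skt.
have := @slack_homo s (s + k); have := @slack_homo (s + k) t.
have := @nth_index_addn s k; have := @nth_index_addn 0 s.
rewrite /slack add0n in eq_slack *; lia.
Qed.

End IndexSubsequence.

Lemma nondecreasing_const_block (G : nat -> nat) d B : 0 < d ->
  (forall s t, s <= t < B.+1 * d -> G s <= G t) ->
  (forall t, t < B.+1 * d -> G t <= B) ->
  exists2 b, b <= B & G (b * d) = G (b * d + d.-1).
Proof.
move=> d_gt0 G_homo G_le; apply: contrapT => /forallPNP no_block.
have climb b : b <= B -> b < G (b * d + d.-1).
  elim: b => [|b IHb] le_bB.
    have := G_homo 0 d.-1; have := no_block 0 (leq0n B); rewrite mul0n add0n; lia.
  have := G_homo (b * d + d.-1) (b.+1 * d); have := G_homo (b.+1 * d) (b.+1 * d + d.-1).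
  have := no_block b.+1 le_bB; have := IHb (ltnW le_bB); rewrite mulSn; nia.
have := climb B (leqnn B); have := G_le (B * d + d.-1); rewrite mulSn; lia.
Qed.

Lemma common_index_run l L d (I J : seq nat) :
  subseq I (iota 0 l) -> subseq J (iota 0 l) -> size I = L -> size J = L -> 0 < d ->
  (2 * (l - L)).+1 * d <= L ->
  exists2 t, t + d <= L & forall s, s < d ->
    nth 0 I (t + s) = nth 0 I t + s /\ nth 0 J (t + s) = nth 0 J t + s.
Proof.
move=> I_sub J_sub szI szJ d_gt0 long.
pose G t := slack I t + slack J t.
have [s t /andP[le_st lt_t]||b le_b eqG] := @nondecreasing_const_block G d (2 * (l - L)) d_gt0.
- have lt_tL : t < L by apply: leq_trans long.
  by rewrite /G; apply: leq_add; [apply: (slack_homo I_sub) | apply: (slack_homo J_sub)]; rewrite ?szI ?szJ.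
- move=> t lt_t; have lt_tL : t < L by apply: leq_trans long.
  have := slack_le I_sub; have := slack_le J_sub; rewrite szI szJ /G.
  by move=> /(_ t lt_tL) leJ /(_ t lt_tL) leI; lia.
have lt_end : b * d + d.-1 < L.
  by apply: leq_trans long; rewrite mulSn; nia.
have le_start : b * d <= b * d + d.-1 by apply: leq_addr.
have := slack_homo I_sub le_start; have := slack_homo J_sub le_start.
rewrite szI szJ => /(_ lt_end) leJ /(_ lt_end) leI.
have [eqI eqJ] : slack I (b * d) = slack I (b * d + d.-1) /\
                 slack J (b * d) = slack J (b * d + d.-1) by move: eqG; rewrite /G; lia.
exists (b * d) => [|s lt_sd]; first by move: lt_end; lia.
have le_s : b * d + s <= b * d + d.-1 by lia.
split; [apply: (slack_const_run I_sub le_start) | apply: (slack_const_run J_sub le_start)];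
  by rewrite ?szI ?szJ.
Qed.

Definition periodic (T : Type) (d : nat) (x : nat -> T) : Prop :=
  forall i j, i = j %[mod d] -> x i = x j.

Section Configurations.
Variable A : finType.

Lemma lcs_le_size (p q : seq A) : lcs p q <= size p.
Proof.
apply/bigmax_leqP => m _; exact: size_subseq (mask_subseq _ _).
Qed.

Lemma lcs_witness (p q : seq A) :
  exists2 m : bitseq, subseq (mask m p) q & lcs p q = size (mask m p).
Proof.
have [|m sub_m lcs_m] := @eq_bigmax_cond _
    [pred m : (size p).-tuple bool | subseq (mask m p) q] (fun m => size (mask m p)).
  by apply/card_gt0P; exists (nseq_tuple (size p) false); rewrite inE mask_false sub0seq.
exists m; first by rewrite inE in sub_m.
by rewrite -lcs_m; apply: eq_bigl => m'; rewrite inE.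
Qed.

Lemma lcs_prefix_indices (x y : nat -> A) l : exists I J, [/\
  subseq I (iota 0 l), subseq J (iota 0 l),
  size I = lcs (Defs.prefix x l) (Defs.prefix y l) & map x I = map y J].
Proof.
have [m sub_m ->] := lcs_witness (Defs.prefix x l) (Defs.prefix y l).
have [m' _ eq_mask] := subseqP sub_m.
exists (mask m (iota 0 l)), (mask m' (iota 0 l)); split; rewrite ?mask_subseq //.
  by rewrite -(size_map x) map_mask.
by rewrite !map_mask.
Qed.

Lemma uinf_periodic d (u : d.-tuple A) (d_gt0 : 0 < d) : periodic d (uinf u d_gt0).
Proof. by move=> i j eq_ij; rewrite /uinf; congr tnth; apply: val_inj. Qed.

Lemma CA_periodic d delta (f : delta.-tuple A -> A) (x : nat -> A) :
  periodic d x -> periodic d (CA f x).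
Proof.
move=> x_per i j eq_ij; rewrite /CA; congr f; apply: eq_from_tnth => k.
by rewrite !tnth_map; apply: x_per; rewrite -modnDml eq_ij modnDml.
Qed.

Lemma iter_cshift k (x : nat -> A) i : iter k (@cshift A) x i = x (i + k).
Proof. by elim: k i => [|k IHk] i /=; rewrite ?addn0 // /cshift IHk addSnnS. Qed.

Lemma periodic_run_shift d (x y : nat -> A) a b : 0 < d -> periodic d x -> periodic d y ->
  (forall s, s < d -> x (a + s) = y (b + s)) ->
  exists k, k < d /\ y = iter k (@cshift A) x.
Proof.
move=> d_gt0 x_per y_per run.
exists ((a + b * d.-1) %% d); split; first exact: ltn_pmod.
apply/funext => n; rewrite iter_cshift.
(* [b * d.-1] plays the role of [- b] modulo [d] without truncated subtraction *)
have b_shift : b + (n + b * d.-1) = b * d + n.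
  by rewrite -{2}(prednK d_gt0) mulnS; lia.
rewrite (y_per n (b + (n + b * d.-1) %% d)) -?run ?ltn_pmod //; last first.
  by rewrite modnDmr b_shift modnMDl.
by apply: x_per; rewrite !modnDmr addnCA.
Qed.

End Configurations.

Local Open Scope ring_scope.

Lemma limn_esup_eq0_cvg (R : realType) (v : nat -> R) :
  (forall n, 0 <= v n) -> limn_esup (fun n => (v n)%:E) = 0%E -> (v @ \oo --> 0)%classic.
Proof.
move=> v_ge0 esup0.
have cvgE : ((fun n => (v n)%:E) @ \oo --> 0%E)%classic.
  by apply: limn_esup_le_cvg; rewrite ?esup0 // => n; rewrite lee_fin.
exact: fine_cvg cvgE.
Qed.

Lemma levenshtein_prefix (R : realType) (A : finType) (x y : nat -> A) l :
  levenshtein R (Defs.prefix x l) (Defs.prefix y l)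
  = (l - lcs (Defs.prefix x l) (Defs.prefix y l))%:R.
Proof.
have := lcs_le_size (Defs.prefix x l) (Defs.prefix y l).
rewrite /levenshtein !size_mkseq => lcs_le.
by rewrite natrB // natrD mulrDl -splitr.
Qed.

Lemma feldman_eq0_lcs (R : realType) (A : finType) (x y : nat -> A) N M :
  (0 < N)%N -> feldman R x y = 0%E ->
  exists2 l, (M <= l)%N & (N * (l - lcs (Defs.prefix x l) (Defs.prefix y l)) < l)%N.
Proof.
move=> N_gt0 feld0.
pose v l := levenshtein R (Defs.prefix x l) (Defs.prefix y l) / l%:R.
have v_ge0 l : 0 <= v l by rewrite /v levenshtein_prefix divr_ge0.
have /cvgr_lt /(_ N%:R^-1) := limn_esup_eq0_cvg v_ge0 feld0.
rewrite invr_gt0 ltr0n N_gt0 => /(_ isT) [l0 _ v_small].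
set l := maxn l0 M.+1.
have l_gt0 : (0 < l)%N by rewrite leq_max orbT.
exists l; first by rewrite leq_max leqnSn orbT.
have := v_small l (leq_maxl l0 M.+1); rewrite /= /v levenshtein_prefix.
by rewrite ltr_pdivrMr ?ltr0n // ltr_pdivlMl ?ltr0n // -natrM ltr_nat.
Qed.

Theorem lemmal (R : realType) (A : finType) (delta : nat) (hd : (0 < delta)%N)
  (f : delta.-tuple A -> A) (u : delta.-tuple A) :
  feldman R (uinf u hd) (CA f (uinf u hd)) = 0%E ->
  exists k : nat, (k < delta)%N /\ CA f (uinf u hd) = iter k (@cshift A) (uinf u hd).
Proof.
set x := uinf u hd; set y := CA f x.
have x_per : periodic delta x := uinf_periodic u hd.
have delta4_gt0 : (0 < 4 * delta)%N by rewrite muln_gt0.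
move=> /(feldman_eq0_lcs delta delta4_gt0) [l le_delta_l close].
have [I [J [I_sub J_sub szI match_xy]]] := lcs_prefix_indices x y l.
set L := lcs _ _ in close szI.
have szJ : size J = L by rewrite -(size_map y) -match_xy size_map.
have le_Ll : (L <= l)%N by rewrite -szI -(size_iota 0 l) size_subseq.
have long : ((2 * (l - L)).+1 * delta <= L)%N by nia.
have [t le_tL run] := common_index_run I_sub J_sub szI szJ hd long.
apply: (periodic_run_shift (a := nth 0 I t) (b := nth 0 J t) hd x_per (CA_periodic f x_per)).
move=> s lt_sd; have [<- <-] := run s lt_sd.
have lt_tsL : (t + s < L)%N by lia.
by rewrite -(nth_map 0 (x 0) x) ?szI // match_xy (nth_map 0) ?szJ.
Qed.
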